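(* Let $n\ge1$, let $z_1,\dots,z_n\in\mathbb{C}$ be pairwise distinct, let $k_1,\dots,k_n\ge 0$ be integers, let $\beta_1,\dots,\beta_n\in\mathbb{C}\setminus\{0\}$ and $\alpha_i^{(j)}\in\mathbb{C}\setminus\{0\}$ ($j=1,\dots,n$, $i=1,\dots,k_j$), and set $m=\sum_{j=1}^n(k_j+1)$. Let $Z=J_{1,k_1}\oplus\cdots\oplus J_{n,k_n}\in\mathbb{C}^{m\times m}$, where $J_{j,k_j}\in\mathbb{C}^{(k_j+1)\times(k_j+1)}$ is upper bidiagonal with diagonal entries $z_j$ and superdiagonal entries, from top to bottom, $\alpha_{k_j}^{(j)},\dots,\alpha_1^{(j)}$, and let $w=\begin{bmatrix}\beta_1 e_{k_1+1}^\top&\cdots&\beta_n e_{k_n+1}^\top\end{bmatrix}^\top$ with $e_{k_j+1}=(0,\dots,0,1)^\top\in\mathbb{R}^{k_j+1}$. Define on polynomials the inner product $$\langle p,q\rangle_S=\sum_{j=1}^n|\beta_j|^2\sum_{r=0}^{k_j}\left|\frac{\prod_{i=1}^r\alpha_i^{(j)}}{r!}\right|^2\overline{q^{(r)}(z_j)}\,p^{(r)}(z_j).$$ Let $k<m$ and let $Q_k=[q_1,\dots,q_k]\in\mathbb{C}^{m\times k}$ be a nested orthonormal basis for $\mathcal{K}_k(Z,w)$, with Hessenberg matrix $H_k\in\mathbb{C}^{k\times k}$, scalar $h_{k+1,k}>0$ and vector $q_{k+1}\in\mathbb{C}^m$ with $q_{k+1}^HQ_k=0$ such that $$ZQ_k=Q_kH_k+h_{k+1,k}\,q_{k+1}e_k^\top.$$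 Then the polynomials $p_0,\dots,p_k$ defined by $p_{\ell}(Z)w=q_{\ell+1}$, $p_\ell\in\mathcal{P}_\ell$, form a sequence of Sobolev orthonormal polynomials for $\langle\cdot,\cdot\rangle_S$, and they satisfy the recurrence relation $$z\begin{bmatrix}p_0(z)&\cdots&p_{k-1}(z)\end{bmatrix}=\begin{bmatrix}p_0(z)&\cdots&p_{k-1}(z)\end{bmatrix}H_k+h_{k+1,k}\,p_k(z)\,e_k^\top.$$ Conversely, if $p_0,\dots,p_k$ is a sequence of Sobolev orthonormal polynomials for $\langle\cdot,\cdot\rangle_S$ satisfying this recurrence with a Hessenberg matrix $H_k$ and $h_{k+1,k}>0$, then $q_{\ell+1}:=p_\ell(Z)w$ ($\ell=0,\dots,k$) give a nested orthonormal basis $Q_k=[q_1,\dots,q_k]$ of $\mathcal{K}_k(Z,w)$ with $ZQ_k=Q_kH_k+h_{k+1,k}q_{k+1}e_k^\top$.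
   Context: $\mathcal{P}_\ell$ is the space of complex polynomials of degree at most $\ell$ ($\mathcal{P}_{-1}=\{0\}$). $\mathcal{K}_k(A,v)=\mathrm{span}\{v,Av,\dots,A^{k-1}v\}$. A matrix $Q_k=[q_1,\dots,q_k]$ is a nested orthonormal basis for $\mathcal{K}_k(A,v)$ if $Q_k^HQ_k=I$ and $\mathrm{span}\{q_1,\dots,q_i\}=\mathcal{K}_i(A,v)$ for $i=1,\dots,k$. A Hessenberg matrix $H$ has $h_{i,j}=0$ whenever $i-1>j$. A sequence $\{p_\ell\}$ is a sequence of Sobolev orthonormal polynomials for $\langle\cdot,\cdot\rangle_S$ if $p_\ell\in\mathcal{P}_\ell\setminus\mathcal{P}_{\ell-1}$ and $\langle p_k,p_\ell\rangle_S=\delta_{k\ell}$. $e_k$ is the $k$th standard unit vector of $\mathbb{R}^k$. *)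

(* Complex numbers: an arbitrary numClosedFieldType C
   (e.g. C = R[i] for real R). *)
From HB Require Import structures.
From mathcomp Require Import all_boot all_order all_algebra.
Set Implicit Arguments. Unset Strict Implicit. Unset Printing Implicit Defensive.
Import Order.TTheory GRing.Theory Num.Theory.
Local Open Scope ring_scope.

Section Defs.
Variable C : numClosedFieldType.

Definition polymx_apply m (p : {poly C}) (A : 'M[C]_m) (v : 'cV[C]_m) : 'cV[C]_m :=
  \sum_(i < size p) p`_i *: iter i (mulmx A) v.

Definition adj m k (A : 'M[C]_(m, k)) : 'M[C]_(k, m) := map_mx (fun x => x^*) A^T.

Definition jordan_block (zj : C) (kj : nat) (alphaj : nat -> C) : 'M[C]_(kj.+1) :=
  \matrix_(a, b) (if a == b then zj
                  else if (b : nat) == (a : nat).+1 then alphaj (kj - a)%N else 0).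

Definition Zmat n (z : 'I_n -> C) (kj : 'I_n -> nat) (alpha : 'I_n -> nat -> C) :
  'M[C]_(\sum_(j < n) (kj j).+1) :=
  mxdiag (fun j : 'I_n => jordan_block (z j) (kj j) (alpha j)).

Definition wvec n (kj : 'I_n -> nat) (beta : 'I_n -> C) :
  'cV[C]_(\sum_(j < n) (kj j).+1) :=
  mxcol (fun j : 'I_n => beta j *: (delta_mx ord_max 0 : 'cV[C]_((kj j).+1))).

Definition sobolev_ip n (z : 'I_n -> C) (kj : 'I_n -> nat) (beta : 'I_n -> C)
  (alpha : 'I_n -> nat -> C) (p q : {poly C}) : C :=
  \sum_(j < n) `|beta j| ^+ 2 *
    \sum_(r < (kj j).+1)
      `|(\prod_(1 <= i < r.+1) alpha j i) / (r`!)%:R| ^+ 2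
        * ((q^`(r)).[z j])^* * (p^`(r)).[z j].

Definition sobolev_onseq (ip : {poly C} -> {poly C} -> C) (p : nat -> {poly C})
  (k : nat) : Prop :=
  (forall l, (l <= k)%N -> size (p l) = l.+1) /\
  (forall a b, (a <= k)%N -> (b <= k)%N -> ip (p a) (p b) = (a == b)%:R).

Definition is_hessenberg k (H : 'M[C]_k) : Prop :=
  forall i j : 'I_k, ((j : nat).+1 < i)%N -> H i j = 0.

Definition ek k : 'rV[C]_k := \row_(j < k) (if (j : nat) == k.-1 then 1 else 0).

(* rows are (A^r v)^T, r < i : spans K_i(A, v) (transposed) *)
Definition krylov_mx m (A : 'M[C]_m) (v : 'cV[C]_m) (i : nat) : 'M[C]_(i, m) :=
  \matrix_(r < i, c < m) (iter r (mulmx A) v) c 0.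

(* rows are q_1^T, ..., q_i^T (remaining rows zero) *)
Definition firstcols m k (Q : 'M[C]_(m, k)) (i : nat) : 'M[C]_(k, m) :=
  \matrix_(r < k, c < m) (if (r < i)%N then Q c r else 0).

Definition nested_onb m k (A : 'M[C]_m) (v : 'cV[C]_m) (Q : 'M[C]_(m, k)) : Prop :=
  adj Q *m Q = 1%:M /\
  forall i, (1 <= i <= k)%N -> (firstcols Q i == krylov_mx A v i)%MS.

(* q_{l+1}: the l-th column of Q for l < k, and q for l = k *)
Definition colq m k (Q : 'M[C]_(m, k)) (q : 'cV[C]_m) (l : nat) : 'cV[C]_m :=
  match @insub nat (fun x => (x < k)%N) 'I_k l with
  | Some j => col j Q
  | None => q
  end.

Definition prow (p : nat -> {poly C}) k (x : C) : 'rV[C]_k :=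
  \row_(j < k) (p j).[x].

Definition recurrence (p : nat -> {poly C}) k (H : 'M[C]_k) (h : C) : Prop :=
  forall x : C, x *: prow p k x = prow p k x *m H + (h * (p k).[x]) *: ek k.

End Defs.
Arguments ek {C} k.

From mathcomp Require Import all_boot all_order all_algebra.
From mathcomp Require Import ring.
Set Implicit Arguments. Unset Strict Implicit. Unset Printing Implicit Defensive.
Import GRing.Theory Num.Theory.
Local Open Scope ring_scope.

(** The map p |-> p(Z)w is an isometry from (polynomials, <.,.>_S) to C^m
  with the Euclidean inner product: on a Jordan block, the entries of
  p(J)e_{k+1} are the Taylor coefficients p^(r)(z)/r! scaled by products of
  the alpha's, which is exactly the weight in <.,.>_S.  It maps polynomials of
  degree < i into K_i(Z, w) and intertwines multiplication by z with Z.  Hence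
  q_{l+1} = p_l(Z)w turns orthonormality of the p_l into that of the q_l, the
  degree filtration into the nested Krylov bases, and the recurrence into the
  Arnoldi relation.  For the converse implications one also needs p |-> p(Z)w
  to be injective on polynomials of degree <= k: this holds because the
  orthonormal vectors q_1, ..., q_{k+1} lie in K_{k+1}(Z, w), which therefore
  has dimension k+1. *)

Section Polynomials.
Variable R : numDomainType.

Lemma size_sum_leq I (r : seq I) (P : pred I) (F : I -> {poly R}) n :
  (forall i, P i -> (size (F i) <= n)%N) -> (size (\sum_(i <- r | P i) F i)%R <= n)%N.
Proof.
move=> le_F_n; rewrite (leq_trans (size_sum _ _ _)) //.
by elim/big_ind: _ => // p q; rewrite geq_max => ->.
Qed.

Lemma size_XM_leq (p : {poly R}) n : (size p <= n)%N -> (size ('X * p)%R <= n.+1)%N.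
Proof.
move=> le_p_n; rewrite (leq_trans (size_polyMleq _ _)) // size_polyX.
by case: (size p) le_p_n.
Qed.

Lemma eq_poly_horner (p q : {poly R}) : (forall x, p.[x] = q.[x]) -> p = q.
Proof.
move=> pq; apply/eqP; rewrite -subr_eq0; apply/negPn/negP => pq_neq0.
have := max_poly_roots pq_neq0 (rs := [seq i%:R | i <- iota 0 (size (p - q))]).
rewrite size_map size_iota ltnn => roots_lt; apply: notF; apply: roots_lt.
  by apply/allP => x /mapP [i _ ->]; rewrite /root hornerD hornerN pq subrr.
by rewrite map_inj_uniq ?iota_uniq // => i j /eqP; rewrite eqr_nat => /eqP.
Qed.

End Polynomials.

Section PolymxApply.
Variables (C : numClosedFieldType) (m : nat) (A : 'M[C]_m) (v : 'cV[C]_m).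
Implicit Types (p q r : {poly C}).

Lemma polymx_apply_widen p N : (size p <= N)%N ->
  polymx_apply p A v = \sum_(s < N) p`_s *: iter s (mulmx A) v.
Proof.
move=> le_p_N; rewrite /polymx_apply.
rewrite (big_ord_widen N (fun s => p`_s *: iter s (mulmx A) v)) // big_mkcond.
by apply: eq_bigr => s _; case: ltnP => // le_p_s; rewrite nth_default // scale0r.
Qed.

Lemma polymx_apply0 : polymx_apply 0 A v = 0.
Proof. by rewrite /polymx_apply size_poly0 big_ord0. Qed.

Lemma polymx_applyD p q :
  polymx_apply (p + q) A v = polymx_apply p A v + polymx_apply q A v.
Proof.
pose N := maxn (size p) (size q).
rewrite !(@polymx_apply_widen _ N) ?leq_maxl ?leq_maxr ?size_polyD // -big_split.
by apply: eq_bigr => s _; rewrite coefD scalerDl.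
Qed.

Lemma polymx_applyZ c p : polymx_apply (c *: p) A v = c *: polymx_apply p A v.
Proof.
rewrite !(@polymx_apply_widen _ (size p)) ?size_scale_leq // scaler_sumr.
by apply: eq_bigr => s _; rewrite coefZ scalerA.
Qed.

Lemma polymx_applyB p q :
  polymx_apply (p - q) A v = polymx_apply p A v - polymx_apply q A v.
Proof. by rewrite polymx_applyD -scaleN1r polymx_applyZ scaleN1r. Qed.

Lemma polymx_apply_sum I (s : seq I) (P : pred I) (F : I -> {poly C}) :
  polymx_apply (\sum_(i <- s | P i) F i) A v =
  \sum_(i <- s | P i) polymx_apply (F i) A v.
Proof. exact: (big_morph _ polymx_applyD polymx_apply0). Qed.

Lemma polymx_applyC c : polymx_apply c%:P A v = c *: v.
Proof.
by rewrite (@polymx_apply_widen _ 1) ?size_polyC_leq1 // big_ord1 coefC.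
Qed.

Lemma polymx_applyXM p : polymx_apply ('X * p) A v = A *m polymx_apply p A v.
Proof.
rewrite (@polymx_apply_widen _ (size p).+1) ?size_XM_leq //.
rewrite (@polymx_apply_widen p (size p)) // big_ord_recl coefXM /= scale0r add0r.
by rewrite mulmx_sumr; apply: eq_bigr => s _; rewrite coefXM /= -scalemxAr.
Qed.

Lemma polymx_applyvZ c p : polymx_apply p A (c *: v) = c *: polymx_apply p A v.
Proof.
have iterZ s : iter s (mulmx A) (c *: v) = c *: iter s (mulmx A) v.
  by elim: s => //= s ->; rewrite scalemxAr.
by rewrite /polymx_apply scaler_sumr; apply: eq_bigr => s _; rewrite iterZ !scalerA mulrC.
Qed.

Lemma polymx_applyXn s : polymx_apply 'X^s A v = iter s (mulmx A) v.
Proof.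
elim: s => [|s IHs]; last by rewrite exprS polymx_applyXM IHs.
by rewrite expr0 -polyC1 polymx_applyC scale1r.
Qed.

Lemma mul_rV_krylov_mx i (D : 'rV[C]_i) :
  D *m krylov_mx A v i = (polymx_apply (rVpoly D) A v)^T.
Proof.
apply/matrixP => x c; rewrite (@polymx_apply_widen _ i) ?size_poly // !mxE summxE.
by apply: eq_bigr => s _; rewrite !mxE coef_rVpoly_ord (ord1 x).
Qed.

Lemma polymx_apply_sub_krylov p i : (size p <= i)%N ->
  ((polymx_apply p A v)^T <= krylov_mx A v i)%MS.
Proof.
by move=> le_p_i; apply/submxP; exists (poly_rV p); rewrite mul_rV_krylov_mx poly_rV_K.
Qed.

Lemma polymx_apply_pinv_krylov (u : 'cV[C]_m) i : (u^T <= krylov_mx A v i)%MS ->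
  polymx_apply (rVpoly (u^T *m pinvmx (krylov_mx A v i))) A v = u.
Proof. by move=> u_sub; apply: trmx_inj; rewrite -mul_rV_krylov_mx mulmxKpV. Qed.

Lemma row_krylov_mx i (s : 'I_i) :
  row s (krylov_mx A v i) = (polymx_apply 'X^s A v)^T.
Proof. by apply/matrixP => x c; rewrite polymx_applyXn !mxE (ord1 x). Qed.

Lemma polymx_apply_eq0 N r : row_free (krylov_mx A v N) -> (size r <= N)%N ->
  polymx_apply r A v = 0 -> r = 0.
Proof.
move=> free_K le_r_N r0.
have /eqP : poly_rV r *m krylov_mx A v N = 0.
  by rewrite mul_rV_krylov_mx poly_rV_K // r0 trmx0.
by rewrite mulmx_free_eq0 // => /eqP r_rV0; rewrite -(poly_rV_K le_r_N) r_rV0 linear0.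
Qed.

Lemma polymx_apply_sub_graded k (M : 'M[C]_(k, m)) (p : nat -> {poly C}) t :
  (forall l, (l < t)%N ->
     size (p l) = l.+1 /\ ((polymx_apply (p l) A v)^T <= M)%MS) ->
  forall r, (size r <= t)%N -> ((polymx_apply r A v)^T <= M)%MS.
Proof.
elim: t => [|t IHt] graded r.
  by rewrite size_poly_leq0 => /eqP ->; rewrite polymx_apply0 trmx0 sub0mx.
move=> le_r_t1; have [size_pt pt_sub] := graded t (ltnSn t).
have lc_pt : lead_coef (p t) != 0 by rewrite lead_coef_eq0 -size_poly_gt0 size_pt.
set c := r`_t / lead_coef (p t).
have le_rc_t : (size (r - c *: p t)%R <= t)%N.
  apply/leq_sizeP => j; rewrite leq_eqVlt => /orP [/eqP <-|lt_t_j].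
    have pt_t : (p t)`_t = lead_coef (p t) by rewrite lead_coefE size_pt.
    by rewrite coefB coefZ pt_t /c divfK // subrr.
  by rewrite coefB coefZ !nth_default ?mulr0 ?subr0 ?size_pt // (leq_trans le_r_t1).
have -> : polymx_apply r A v = polymx_apply (r - c *: p t) A v + c *: polymx_apply (p t) A v.
  by rewrite -polymx_applyZ -polymx_applyD subrK.
rewrite [(_ + _)^T]linearD /= addmx_sub //; last by rewrite linearZ /= scalemx_sub.
by apply: (IHt _ _ le_rc_t) => l lt_l_t; apply: graded; rewrite ltnW.
Qed.

End PolymxApply.

Section Adjoint.
Variable C : numClosedFieldType.

Lemma adj_mul m n k (A : 'M[C]_(m, n)) (B : 'M[C]_(n, k)) :
  adj (A *m B) = adj B *m adj A.
Proof. by rewrite /adj trmx_mul map_mxM. Qed.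

Lemma adjZ m n c (A : 'M[C]_(m, n)) : adj (c *: A) = c^* *: adj A.
Proof. by apply/matrixP => i j; rewrite !mxE rmorphM. Qed.

Lemma adj_dotE m (u w : 'cV[C]_m) : (adj u *m w) 0 0 = \sum_a (u a 0)^* * w a 0.
Proof. by rewrite mxE; apply: eq_bigr => a _; rewrite !mxE. Qed.

Lemma adj_dotC m (u w : 'cV[C]_m) : (adj u *m w) 0 0 = ((adj w *m u) 0 0)^*.
Proof.
rewrite !adj_dotE rmorph_sum; apply: eq_bigr => a _.
by rewrite rmorphM /= conjCK mulrC.
Qed.

Lemma mul_col_mxE m n k (U : 'M[C]_(k, m)) (Q : 'M[C]_(m, n)) j a :
  (U *m col j Q) a 0 = (U *m Q) a j.
Proof. by rewrite !mxE; apply: eq_bigr => b _; rewrite !mxE. Qed.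

Lemma adj_col_dot m n (Q : 'M[C]_(m, n)) i j :
  (adj (col i Q) *m col j Q) 0 0 = (adj Q *m Q) i j.
Proof.
have -> : adj (col i Q) = row i (adj Q) by apply/matrixP => a b; rewrite !mxE.
by rewrite -row_mul mxE mul_col_mxE.
Qed.

Lemma row_free_orthonormal r m (G : 'M[C]_(r, m)) : G *m adj G = 1%:M -> row_free G.
Proof. by move=> GG; apply/row_freeP; exists (adj G). Qed.

Lemma orthogonal_not_submx k m (M : 'M[C]_(k, m)) (u : 'cV[C]_m) :
  adj M^T *m u = 0 -> adj u *m u = 1%:M -> ~~ (u^T <= M)%MS.
Proof.
move=> Mu uu; apply/negP => /submxP [D uD]; move/matrixP/(_ 0 0): uu.
rewrite -{1}[u]trmxK uD trmx_mul adj_mul -mulmxA Mu mulmx0 !mxE => /esym/eqP.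
by rewrite oner_eq0.
Qed.

End Adjoint.

Section Blocks.
Variables (C : numClosedFieldType) (n : nat) (p_ : 'I_n -> nat).

Lemma polymx_apply_mxdiag_mxcol (B : forall i, 'M[C]_(p_ i))
    (V : forall i, 'cV[C]_(p_ i)) p :
  polymx_apply p (mxdiag B) (mxcol V) =
  mxcol (fun j => polymx_apply p (B j) (V j)).
Proof.
have iterE s : iter s (mulmx (mxdiag B)) (mxcol V) =
               mxcol (fun j => iter s (mulmx (B j)) (V j)).
  by elim: s => //= s ->; rewrite mul_mxdiag_mxcol.
rewrite /polymx_apply mxcol_sum.
by apply: eq_bigr => s _; rewrite iterE; apply/matrixP => i j; rewrite !mxE.
Qed.

Lemma adj_mxcol (V : forall i, 'cV[C]_(p_ i)) :
  adj (mxcol V) = mxrow (fun j => adj (V j)).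
Proof. by apply/matrixP => i j; rewrite !mxE. Qed.

End Blocks.

Section JordanBlock.
Variables (C : numClosedFieldType) (z : C) (kj : nat) (al : nat -> C).
Local Notation J := (jordan_block z kj al).
Local Notation e := (delta_mx ord_max 0 : 'cV[C]_(kj.+1)).

Lemma jordan_block_mulE (u : 'cV[C]_(kj.+1)) (a : 'I_kj.+1) :
  (J *m u) a 0 =
  z * u a 0 + (if (a < kj)%N then al (kj - a) * u (inord a.+1) 0 else 0).
Proof.
rewrite mxE (bigD1 a) //= !mxE eqxx; congr (_ + _).
case: ifP => [lt_a_kj|le_kj_a].
  have a1_neq_a : (inord a.+1 : 'I_kj.+1) != a.
    by rewrite -val_eqE /= inordK // gtn_eqF.
  rewrite (bigD1 (inord a.+1)) /=; last by rewrite a1_neq_a.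
  rewrite !mxE eq_sym (negbTE a1_neq_a) inordK // eqxx big1 ?addr0 // => b /andP [b_a b_a1].
  rewrite !mxE eq_sym (negbTE b_a); case: eqP => [b_Sa|]; last by rewrite mul0r.
  by case/negP: b_a1; rewrite -val_eqE /= inordK // b_Sa.
rewrite big1 // => b b_a; rewrite !mxE eq_sym (negbTE b_a).
case: eqP => [b_Sa|]; last by rewrite mul0r.
by move: (ltn_ord b); rewrite b_Sa ltnS le_kj_a.
Qed.

Lemma polymx_apply_jordan_block (p : {poly C}) (a : 'I_kj.+1) :
  (polymx_apply p J e) a 0 =
  (p^`N(kj - a)).[z] * \prod_(1 <= i < (kj - a).+1) al i.
Proof.
elim/poly_ind: p a => [|p c IHp] a.
  by rewrite polymx_apply0 mxE nderivn_poly0 ?size_poly0 // horner0 mul0r.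
rewrite polymx_applyD {1}[p * 'X]mulrC polymx_applyXM polymx_applyC.
rewrite mxE [in X in _ + X]mxE jordan_block_mulE !IHp !mxE.
case: ifP => [lt_a_kj|le_kj_a].
  have -> : (kj - a = (kj - a.+1).+1)%N by rewrite subnS prednK // subn_gt0.
  rewrite inordK // nderivnMXaddC hornerD hornerMX big_nat_recr //=.
  rewrite (_ : (a == ord_max) = false) ?mulr0 ?addr0; first by ring.
  by apply/negbTE; rewrite -val_eqE /= ltn_eqF.
have a_kj : (a : nat) = kj by apply/eqP; rewrite eqn_leq -ltnS ltn_ord leqNgt le_kj_a.
have -> : a = ord_max by apply/val_inj.
by rewrite subnn !nderivn0 hornerMXaddC big_geq // !eqxx /= !mulr1 addr0; ring.
Qed.

End JordanBlock.

Lemma sobolev_ip_polymx_apply (C : numClosedFieldType) n (z : 'I_n -> C) kj beta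
    alpha (p q : {poly C}) :
  sobolev_ip z kj beta alpha p q =
  (adj (polymx_apply q (Zmat z kj alpha) (wvec kj beta)) *m
   polymx_apply p (Zmat z kj alpha) (wvec kj beta)) 0 0.
Proof.
rewrite /Zmat /wvec !polymx_apply_mxdiag_mxcol adj_mxcol mul_mxrow_mxcol summxE.
apply: eq_bigr => j _.
rewrite !polymx_applyvZ adjZ -scalemxAl -scalemxAr !scalerA mxE normCKC.
congr (_ * _); rewrite adj_dotE (reindex_inj rev_ord_inj) /=.
apply: eq_bigr => r _; rewrite !polymx_apply_jordan_block /= subSS.
set s := (kj j - r)%N; set P := \prod_(1 <= i < s.+1) alpha j i.
have fact_neq0 : s`!%:R != 0 :> C by rewrite pnatr_eq0 -lt0n fact_gt0.
rewrite !nderivn_def !hornerMn rmorphMn normCKC !rmorphM fmorphV /= conjC_nat.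
rewrite -(mulr_natr (q^`N(s).[z j]^*)) -(mulr_natr (p^`N(s).[z j])).
move: (q^`N(s).[z j]^*) (p^`N(s).[z j]) (P^*) => a b Pc.
move: fact_neq0; move: (s`!%:R : C) => f f_neq0.
by field.
Qed.

Section ArnoldiPolynomials.
Variables (C : numClosedFieldType) (m K : nat) (A : 'M[C]_m) (v : 'cV[C]_m).
Local Notation PA p := (polymx_apply p A v).
Implicit Types (Q : 'M[C]_(m, K)) (q : 'cV[C]_m) (p : nat -> {poly C}) (H : 'M[C]_K).

Lemma colq_ord Q q (i : 'I_K) : colq Q q i = col i Q.
Proof. by rewrite /colq valK. Qed.

Lemma colq_last Q q : colq Q q K = q.
Proof. by rewrite /colq insubF // ltnn. Qed.

Variant colq_spec Q q (l : nat) : 'cV[C]_m -> Prop :=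
  | ColqCol (i : 'I_K) of l = i : colq_spec Q q l (col i Q)
  | ColqLast of l = K : colq_spec Q q l q.

Lemma colqP Q q l : (l <= K)%N -> colq_spec Q q l (colq Q q l).
Proof.
rewrite leq_eqVlt => /orP [/eqP ->|lt_l_K]; first by rewrite colq_last; constructor.
by rewrite -[l]/(val (Ordinal lt_l_K)) colq_ord; constructor.
Qed.

Lemma row_firstcols Q l (r : 'I_K) :
  row r (firstcols Q l) = if (r < l)%N then (col r Q)^T else 0.
Proof. by apply/matrixP => x c; rewrite !mxE; case: ifP; rewrite ?mxE. Qed.

Lemma colq_sub_krylov Q q l : nested_onb A v Q -> (l < K)%N ->
  ((colq Q q l)^T <= krylov_mx A v l.+1)%MS.
Proof.
move=> [_ nested] lt_l_K; have /andP [sub _] := nested l.+1 lt_l_K.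
apply: submx_trans sub; rewrite -[l]/(val (Ordinal lt_l_K)) colq_ord.
by have := row_firstcols Q l.+1 (Ordinal lt_l_K); rewrite /= ltnSn => <-; exact: row_sub.
Qed.

Lemma krylov_sub_firstcols Q l : nested_onb A v Q -> (l <= K)%N ->
  (krylov_mx A v l <= firstcols Q l)%MS.
Proof.
case: l => [|l] [_ nested] le_l_K; first by rewrite flatmx0 sub0mx.
by have /andP [] := nested l.+1 le_l_K.
Qed.

Definition colq_orthonormal Q q :=
  forall a b, (a <= K)%N -> (b <= K)%N ->
  (adj (colq Q q a) *m colq Q q b) 0 0 = (a == b)%:R.

Lemma colq_orthonormalP Q q :
  adj Q *m Q = 1%:M -> adj q *m Q = 0 -> adj q *m q = 1%:M -> colq_orthonormal Q q.
Proof.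
move=> QQ qQ qq a b /colqP[i ->|->] /colqP[j ->|->].
- by rewrite adj_col_dot QQ mxE.
- by rewrite adj_dotC mul_col_mxE qQ !mxE rmorph0 ltn_eqF.
- by rewrite mul_col_mxE qQ !mxE gtn_eqF.
- by rewrite qq mxE !eqxx.
Qed.

Lemma colq_not_sub_firstcols Q q l : colq_orthonormal Q q -> (l <= K)%N ->
  ~~ ((colq Q q l)^T <= firstcols Q l)%MS.
Proof.
move=> ortho le_l_K; apply: orthogonal_not_submx; last first.
  by apply/matrixP => i j; rewrite !ord1 ortho // eqxx mxE.
apply/matrixP => r i; rewrite (ord1 i) !mxE.
case: (ltnP r l) => [lt_r_l|le_l_r]; last first.
  by rewrite big1 // => c _; rewrite !mxE ltnNge le_l_r /= rmorph0 mul0r.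
transitivity ((adj (colq Q q r) *m colq Q q l) 0 0).
  by rewrite colq_ord adj_dotE; apply: eq_bigr => c _; rewrite !mxE lt_r_l.
by rewrite ortho ?(ltnW (ltn_ord r)) // ltn_eqF.
Qed.

Lemma row_free_krylov_of_orthonormal Q q p : colq_orthonormal Q q ->
  (forall l, (l <= K)%N -> (size (p l) <= l.+1)%N /\ PA (p l) = colq Q q l) ->
  row_free (krylov_mx A v K.+1).
Proof.
move=> ortho p_E.
pose G : 'M[C]_(K.+1, m) := \matrix_(l < K.+1, c < m) colq Q q l c 0.
have G_free : row_free G.
  apply: row_free_orthonormal; apply/matrixP => a b.
  rewrite !mxE eq_sym -(ortho b a) ?adj_dotE ?leq_ord //.
  by apply: eq_bigr => c _; rewrite !mxE mulrC.
have G_sub : (G <= krylov_mx A v K.+1)%MS.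
  apply/row_subP => l; have [le_pl_l pl_E] := p_E l (leq_ord l).
  have -> : row l G = (PA (p l))^T by apply/matrixP => x c; rewrite (ord1 x) !mxE pl_E.
  by apply: polymx_apply_sub_krylov; rewrite (leq_trans le_pl_l).
by rewrite /row_free eqn_leq rank_leq_row -{1}(eqP G_free) mxrankS.
Qed.

(* The polynomial whose value at A, applied to v, is column j of the
   right-hand side Q H + h q e_K^T of the Arnoldi relation. *)
Definition arnoldi_poly p H (h : C) (j : 'I_K) : {poly C} :=
  \sum_(i < K) H i j *: p i + (h * ek K 0 j) *: p K.

Lemma size_arnoldi_poly p H h (j : 'I_K) :
  (forall l, (l <= K)%N -> (size (p l) <= l.+1)%N) ->
  (size ('X * p j - arnoldi_poly p H h j)%R <= K.+1)%N.
Proof.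
move=> size_p; have le_pl_K (l : 'I_K) : (size (p l) <= K)%N.
  exact: leq_trans (size_p l (ltnW (ltn_ord l))) (ltn_ord l).
rewrite (leq_trans (size_polyD _ _)) // size_polyN geq_max size_XM_leq ?le_pl_K //=.
rewrite (leq_trans (size_polyD _ _)) // geq_max (leq_trans (size_scale_leq _ _)) ?size_p //.
rewrite andbT size_sum_leq // => i _.
by rewrite (leq_trans (size_scale_leq _ _)) // leqW.
Qed.

Lemma recurrenceP p H h :
  recurrence p H h <-> forall j : 'I_K, 'X * p j = arnoldi_poly p H h j.
Proof.
have hornerE x j : (arnoldi_poly p H h j).[x] =
    (prow p K x *m H + (h * (p K).[x]) *: ek K) 0 j.
  rewrite /arnoldi_poly !mxE hornerD horner_sum hornerZ mulrAC; congr (_ + _).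
  by apply: eq_bigr => i _; rewrite hornerZ !mxE mulrC.
split=> [rec j|rec x].
  apply: eq_poly_horner => x; rewrite hornerE -rec mulrC hornerMX !mxE.
  by rewrite mulrC.
apply/matrixP => i j; rewrite (ord1 i) -hornerE -rec mulrC hornerMX !mxE.
by rewrite mulrC.
Qed.

Lemma col_arnoldi_rhs Q q H h j :
  col j (Q *m H + h *: (q *m ek K)) = \sum_i H i j *: col i Q + (h * ek K 0 j) *: q.
Proof.
apply/matrixP => c i; rewrite (ord1 i) !mxE summxE big_ord1 !mxE mulrA.
congr (_ + _); last exact: mulrAC.
by apply: eq_bigr => l _; rewrite !mxE mulrC.
Qed.

Lemma arnoldi_relationP Q q H h p :
  (forall l, (l <= K)%N -> PA (p l) = colq Q q l) ->
  A *m Q = Q *m H + h *: (q *m ek K) <->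
  forall j : 'I_K, PA ('X * p j) = PA (arnoldi_poly p H h j).
Proof.
move=> p_E.
have colL j : col j (A *m Q) = PA ('X * p j).
  by rewrite polymx_applyXM p_E ?(ltnW (ltn_ord j)) // colq_ord !colE mulmxA.
have colR j : col j (Q *m H + h *: (q *m ek K)) = PA (arnoldi_poly p H h j).
  rewrite col_arnoldi_rhs polymx_applyD polymx_apply_sum polymx_applyZ p_E // colq_last.
  congr (_ + _); apply: eq_bigr => i _.
  by rewrite polymx_applyZ p_E ?(ltnW (ltn_ord i)) // colq_ord.
split=> [E j|E]; first by rewrite -colL -colR E.
by apply/matrixP => c j; move/colP/(_ c): (E j); rewrite -colL -colR !mxE.
Qed.

Lemma arnoldi_polys_exist Q q H h : (0 < K)%N -> nested_onb A v Q -> h != 0 ->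
  A *m Q = Q *m H + h *: (q *m ek K) ->
  exists p, forall l, (l <= K)%N ->
    (size (p l) <= l.+1)%N /\ PA (p l) = colq Q q l.
Proof.
move=> K_gt0 onb h_neq0 E.
pose pl l := rVpoly ((colq Q q l)^T *m pinvmx (krylov_mx A v l.+1)).
have size_pl l : (size (pl l) <= l.+1)%N by apply: size_poly.
have pl_E l : (l < K)%N -> PA (pl l) = colq Q q l.
  by move=> lt_l_K; rewrite polymx_apply_pinv_krylov ?colq_sub_krylov.
have lt_K1_K : (K.-1 < K)%N by rewrite ltn_predL.
pose jK := Ordinal lt_K1_K.
(* The last column of the Arnoldi relation expresses q through Q. *)
pose pK := h^-1 *: ('X * pl K.-1 - \sum_(i < K) H i jK *: pl i).
exists (fun l => if (l < K)%N then pl l else pK) => l le_l_K.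
case: ltnP => [lt_l_K|le_K_l]; first by split; [exact: size_pl | exact: pl_E].
have -> : l = K by apply/eqP; rewrite eqn_leq le_l_K le_K_l.
split.
  rewrite (leq_trans (size_scale_leq _ _)) // (leq_trans (size_polyD _ _)) //.
  rewrite size_polyN geq_max size_XM_leq ?(leq_trans (size_pl _)) ?prednK //=.
  apply: size_sum_leq => i _; rewrite (leq_trans (size_scale_leq _ _)) //.
  by rewrite (leq_trans (size_pl i)) // ltnS ltnW.
move: (congr1 (col jK) E).
rewrite col_arnoldi_rhs mxE eqxx mulr1 colE -mulmxA -colE => last_col.
rewrite colq_last /pK polymx_applyZ polymx_applyB polymx_applyXM polymx_apply_sum.
rewrite (eq_bigr (fun i => H i jK *: col i Q)) => [|i _]; last first.
  by rewrite polymx_applyZ pl_E // colq_ord.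
rewrite pl_E // -[K.-1]/(val jK) colq_ord last_col.
by rewrite addrC addKr scalerA mulVf // scale1r.
Qed.

Definition polys_mx p : 'M[C]_(m, K) := \matrix_(c < m, l < K) (PA (p l)) c 0.

Lemma col_polys_mx p (l : 'I_K) : col l (polys_mx p) = PA (p l).
Proof. by apply/matrixP => c i; rewrite (ord1 i) !mxE. Qed.

Lemma firstcols_polys_mx_eqmx p i : (forall l, (l <= K)%N -> size (p l) = l.+1) ->
  (i <= K)%N -> (firstcols (polys_mx p) i == krylov_mx A v i)%MS.
Proof.
move=> size_p le_i_K; apply/andP; split; apply/row_subP => r.
  rewrite row_firstcols; case: ifP => [lt_r_i|_]; last by rewrite sub0mx.
  by rewrite col_polys_mx polymx_apply_sub_krylov // size_p ?(ltnW (ltn_ord r)).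
have graded l : (l < i)%N ->
    size (p l) = l.+1 /\ ((PA (p l))^T <= firstcols (polys_mx p) i)%MS.
  move=> lt_l_i; have lt_l_K := leq_trans lt_l_i le_i_K.
  split; first by rewrite size_p // ltnW.
  have := row_firstcols (polys_mx p) i (Ordinal lt_l_K).
  by rewrite /= lt_l_i col_polys_mx => <-; exact: row_sub.
by rewrite row_krylov_mx (polymx_apply_sub_graded graded) ?size_polyXn.
Qed.

Section InnerProduct.
Variable ip : {poly C} -> {poly C} -> C.
Hypothesis ip_E : forall r s : {poly C}, ip r s = (adj (PA s) *m PA r) 0 0.

Lemma arnoldi_polys_sobolev Q q H h p :
  nested_onb A v Q -> adj q *m Q = 0 -> adj q *m q = 1%:M ->
  A *m Q = Q *m H + h *: (q *m ek K) ->
  (forall l, (l <= K)%N -> (size (p l) <= l.+1)%N /\ PA (p l) = colq Q q l) ->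
  sobolev_onseq ip p K /\ recurrence p H h.
Proof.
move=> onb qQ qq E p_E.
have ortho := colq_orthonormalP onb.1 qQ qq.
have size_p l : (l <= K)%N -> size (p l) = l.+1.
  move=> le_l_K; have [le_pl pl_E] := p_E l le_l_K.
  apply/eqP; rewrite eqn_leq le_pl ltnNge.
  apply: contra (colq_not_sub_firstcols ortho le_l_K) => le_pl_l.
  rewrite -pl_E; apply: submx_trans (polymx_apply_sub_krylov _ _ le_pl_l) _.
  exact: krylov_sub_firstcols.
split.
  split=> // a b le_a_K le_b_K.
  by rewrite ip_E !(proj2 (p_E _ _)) // ortho // eq_sym.
apply/recurrenceP => j; apply/eqP; rewrite -subr_eq0; apply/eqP.
apply: (polymx_apply_eq0 (row_free_krylov_of_orthonormal ortho p_E)).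
  by apply: size_arnoldi_poly => l /p_E [].
have [pE _] := arnoldi_relationP H h (fun l le_l_K => proj2 (p_E l le_l_K)).
by rewrite polymx_applyB (pE E j) subrr.
Qed.

Lemma nested_onb_of_sobolev p H h :
  sobolev_onseq ip p K -> recurrence p H h ->
  nested_onb A v (polys_mx p) /\
  A *m polys_mx p = polys_mx p *m H + h *: (PA (p K) *m ek K).
Proof.
move=> [size_p ortho] rec.
have p_E l : (l <= K)%N -> PA (p l) = colq (polys_mx p) (PA (p K)) l.
  by case/(colqP (polys_mx p) (PA (p K))) => [i ->|->]; rewrite ?col_polys_mx.
split; last by apply/(arnoldi_relationP H h p_E) => j; move/recurrenceP: rec => ->.
split; last by move=> i /andP [_ le_i_K]; apply: firstcols_polys_mx_eqmx.
apply/matrixP => a b.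
by rewrite -adj_col_dot !col_polys_mx -ip_E ortho ?(ltnW (ltn_ord _)) // mxE eq_sym.
Qed.

End InnerProduct.
End ArnoldiPolynomials.

Theorem corollary1 (C : numClosedFieldType) (n : nat) (z : 'I_n -> C)
  (kj : 'I_n -> nat) (beta : 'I_n -> C) (alpha : 'I_n -> nat -> C) :
  (1 <= n)%N -> injective z -> (forall j, beta j != 0) ->
  (forall j i, (1 <= i <= kj j)%N -> alpha j i != 0) ->
  let m := (\sum_(j < n) (kj j).+1)%N in
  let Z : 'M[C]_m := Zmat z kj alpha in
  let w : 'cV[C]_m := wvec kj beta in
  let ip := sobolev_ip z kj beta alpha in
  forall k : nat, (0 < k)%N -> (k < m)%N ->
  (forall (Q : 'M[C]_(m, k)) (H : 'M[C]_k) (h : C) (q : 'cV[C]_m),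
     nested_onb Z w Q -> is_hessenberg H -> 0 < h ->
     adj q *m Q = 0 -> adj q *m q = 1%:M ->
     Z *m Q = Q *m H + h *: (q *m ek k) ->
     (exists p : nat -> {poly C}, forall l, (l <= k)%N ->
        (size (p l) <= l.+1)%N /\ polymx_apply (p l) Z w = colq Q q l) /\
     (forall p : nat -> {poly C},
        (forall l, (l <= k)%N ->
           (size (p l) <= l.+1)%N /\ polymx_apply (p l) Z w = colq Q q l) ->
        sobolev_onseq ip p k /\ recurrence p H h))
  /\
  (forall (p : nat -> {poly C}) (H : 'M[C]_k) (h : C),
     sobolev_onseq ip p k -> is_hessenberg H -> 0 < h -> recurrence p H h ->
     let Q : 'M[C]_(m, k) := \matrix_(c < m, l < k) (polymx_apply (p l) Z w) c 0 in
     let q : 'cV[C]_m := polymx_apply (p k) Z w in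
     nested_onb Z w Q /\ Z *m Q = Q *m H + h *: (q *m ek k)).
Proof.
move=> _ _ _ _ m Z w ip k k_gt0 _.
have ip_E p q : ip p q = (adj (polymx_apply q Z w) *m polymx_apply p Z w) 0 0.
  exact: sobolev_ip_polymx_apply.
split=> [Q H h q onb _ h_gt0 qQ qq E | p H h onseq _ _ rec].
  split; first exact: arnoldi_polys_exist k_gt0 onb (lt0r_neq0 h_gt0) E.
  by move=> p p_E; exact (arnoldi_polys_sobolev ip_E onb qQ qq E p_E).
exact (nested_onb_of_sobolev ip_E onseq rec).
Qed.
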